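(* Let $\mathbf A\in\mathbb R^{n\times p}$ have columns $\mathbf a_1,\dots,\mathbf a_p$ normalized to zero sample mean and unit norm: $\mathbf 1^T\mathbf a_k=0$ and $\|\mathbf a_k\|_2=1$ for $k=1,\dots,p$, and let $\rho_{ij}=\mathbf a_i^T\mathbf a_j$. Let $\mathbf y\in\mathbb R^n$, let $\mathbf w$ be a weight vector as in the context and $\Delta:=\min\{w_l-w_{l+1}: l=1,\dots,p-1\}$. Let $\widehat{\mathbf x}$ be any minimizer of $\frac12\|\mathbf A\mathbf x-\mathbf y\|_2^2+\Omega_{\mathbf w}(\mathbf x)$ over $\mathbf x\in\mathbb R^p$. Then for every pair $(i,j)$ with $\|\mathbf y\|_2\sqrt{2-2\rho_{ij}\operatorname{sign}(\widehat x_i\widehat x_j)}<\Delta$, we have $|\widehat x_i|=|\widehat x_j|$.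
   Context: $\mathbf w=(w_1,\dots,w_p)\in\mathbb R^p_+$ satisfies $w_1\ge w_2\ge\cdots\ge w_p\ge0$ and $w_1>0$. The ordered weighted $\ell_1$ (OWL) norm is $\Omega_{\mathbf w}(\mathbf x)=\sum_{i=1}^p w_i|x|_{[i]}$, where $|x|_{[i]}$ denotes the $i$-th largest component of $\mathbf x$ in magnitude. $\mathbf 1$ is the all-ones vector; $\operatorname{sign}$ denotes the sign function. *)

From mathcomp Require Import all_boot all_order all_algebra.
Set Implicit Arguments. Unset Strict Implicit. Unset Printing Implicit Defensive.
Import Order.TTheory GRing.Theory Num.Theory.
Local Open Scope ring_scope.

(* Magnitudes of the entries of x, sorted in nonincreasing order:
   the k-th entry (0-based) is |x|_[k+1]. *)
Definition sorted_abs (R : rcfType) (p : nat) (x : 'cV[R]_p) : seq R :=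
  sort (fun a b : R => b <= a) [seq `|x i 0| | i <- enum 'I_p].

Definition owl (R : rcfType) (p : nat) (w : 'cV[R]_p) (x : 'cV[R]_p) : R :=
  \sum_(i < p) w i 0 * nth 0 (sorted_abs x) i.

Definition owl_weights (R : rcfType) (p : nat) (w : 'cV[R]_p) : Prop :=
  (forall i j : 'I_p, (i <= j)%N -> w j 0 <= w i 0) /\
  (forall i : 'I_p, 0 <= w i 0) /\
  (exists i0 : 'I_p, nat_of_ord i0 = 0%N /\ 0 < w i0 0).

Definition owl_gaps (R : rcfType) (p : nat) (w : 'cV[R]_p) : seq R :=
  [seq w lm.1 0 - w lm.2 0 | lm <- enum (predT : pred ('I_p * 'I_p)%type)
     & nat_of_ord lm.2 == (nat_of_ord lm.1).+1].

(* Delta = min_{l=1..p-1} (w_l - w_{l+1}); for p >= 2 the list of gaps is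
   nonempty and its head is one of its elements, so this is the true minimum. *)
Definition owl_Delta (R : rcfType) (p : nat) (w : 'cV[R]_p) : R :=
  foldr Order.min (head 0 (owl_gaps w)) (owl_gaps w).

Definition owl_obj (R : rcfType) (n p : nat) (A : 'M[R]_(n, p))
  (y : 'cV[R]_n) (w : 'cV[R]_p) (x : 'cV[R]_p) : R :=
  2^-1 * \sum_(r < n) ((A *m x) r 0 - y r 0) ^+ 2 + owl w x.

Definition norm2 (R : rcfType) (n : nat) (y : 'cV[R]_n) : R :=
  Num.sqrt (\sum_(r < n) y r 0 ^+ 2).

(* If |x_i| > |x_j| at a minimizer x, move a small amount eps of magnitude
   from coordinate i to coordinate j, keeping the signs (when x_j = 0 its sign
   is chosen to agree with that of rho_ij).  The OWL norm is the maximum over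
   permutations of sum_k w_k |x_(s k)| (rearrangement inequality), and a
   sorting permutation of the perturbed point still ranks i before j, so the
   penalty drops by at least Delta * eps.  The least-squares term grows by at
   most eps ||A x - y|| ||s_j a_j - s_i a_i|| + O(eps^2), where
   ||A x - y|| <= ||y|| by comparison with x = 0 and
   ||s_j a_j - s_i a_i||^2 = 2 - 2 s_i s_j rho_ij.  For small eps the
   objective strictly decreases. *)
From mathcomp Require Import all_boot all_order all_algebra all_fingroup.
From mathcomp Require Import ring lra zify.
Import Order.TTheory GRing.Theory Num.Theory.
Local Open Scope ring_scope.
Set Implicit Arguments. Unset Strict Implicit.

Lemma foldr_min_le d (T : orderType d) (h : T) s a :
  a \in s -> (foldr Order.min h s <= a)%O.
Proof.
elim: s => //= b s IH; rewrite inE => /orP[/eqP->|/IH h'].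
  by rewrite ge_min lexx.
by rewrite ge_min h' orbT.
Qed.

Section Rearrangement.
Variables (R : realDomainType) (p : nat).
Implicit Types (u f : 'I_p -> R) (s : {perm 'I_p}).

Definition perm_sum u f s : R := \sum_(k < p) u k * f (s k).

Definition sorting_perm f s := forall a b : 'I_p, (a < b)%N -> f (s b) <= f (s a).

Lemma perm_sumD2 u f s (a b : 'I_p) : a != b ->
  perm_sum u f s = u a * f (s a) + u b * f (s b)
                   + \sum_(k | (k != a) && (k != b)) u k * f (s k).
Proof. by move=> ab; rewrite /perm_sum (bigD1 a) // (bigD1 b) 1?eq_sym //= addrA. Qed.

Lemma perm_sum_tperm u f s (a b : 'I_p) : a != b ->
  perm_sum u f (tperm a b * s)%g
  = perm_sum u f s + (u a - u b) * (f (s b) - f (s a)).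
Proof.
move=> ab; rewrite !(perm_sumD2 _ _ _ ab) !permM tpermL tpermR.
rewrite [X in _ + X = _](eq_bigr (fun k => u k * f (s k))); first by ring.
by move=> k /andP[ka kb]; rewrite permM tpermD // eq_sym.
Qed.

(* Among the maximizers of [perm_sum u f], one maximizing the auxiliary sum
   with strictly decreasing weights p - k must sort f. *)
Lemma exists_sorting_perm_max u f :
    (forall a b : 'I_p, (a <= b)%N -> u b <= u a) ->
  exists2 s, sorting_perm f s & forall t, perm_sum u f t <= perm_sum u f s.
Proof.
move=> u_noninc; pose F := perm_sum u f.
pose G := perm_sum (fun k : 'I_p => (p - k)%:R) f.
have [s1 _ s1_max] := @arg_maxP _ R _ 1%g predT F isT.
have {}s1_max t : F t <= F s1 by exact: s1_max.
have [s /eqP Fs s_max] := @arg_maxP _ R _ s1 (fun s => F s == F s1) G (eqxx _).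
exists s => [a b ab|t]; last by rewrite [perm_sum u f s]Fs.
rewrite leNgt; apply/negP => lt_ab; have ab' : a != b by rewrite neq_ltn ab.
have : F (tperm a b * s)%g == F s1.
  rewrite eq_le s1_max // -Fs /F perm_sum_tperm // lerDl mulr_ge0 //.
    by rewrite subr_ge0 u_noninc // ltnW.
  by rewrite subr_ge0 ltW.
move=> /s_max G_le; have : G (tperm a b * s)%g <= G s by exact: G_le.
rewrite /G perm_sum_tperm // gerDl leNgt mulr_gt0 ?subr_gt0 //.
by rewrite ltr_nat; have := ltn_ord b; lia.
Qed.

End Rearrangement.

Section OwlNorm.
Variables (R : rcfType) (p : nat).
Implicit Types (w x : 'cV[R]_p).

Definition entries w (k : 'I_p) : R := w k 0.
Definition abs_entries x (l : 'I_p) : R := `|x l 0|.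

Lemma sorted_abs_sorting_perm x s : sorting_perm (abs_entries x) s ->
  sorted_abs x = [seq abs_entries x (s k) | k <- enum 'I_p].
Proof.
move=> s_sorts; pose f := abs_entries x.
have nthE m (hm : (m < p)%N) :
    nth 0 [seq f (s k) | k <- enum 'I_p] m = f (s (Ordinal hm)).
  rewrite (nth_map (Ordinal hm)) ?size_enum_ord //.
  by do 2 f_equal; apply: val_inj; rewrite /= nth_enum_ord.
apply: (sorted_eq (leT := fun a b : R => b <= a)).
- by move=> b a c /= h1 h2; exact: le_trans h2 h1.
- by move=> a b /andP[h1 h2]; apply: le_anti; rewrite h1 h2.
- by apply: sort_sorted => a b; exact: le_total.
- apply/(sortedP 0) => k; rewrite size_map size_enum_ord => kp.
  have k1 : (k < p)%N by apply: ltn_trans kp.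
  by rewrite (nthE k k1) (nthE _ kp); apply: s_sorts => /=.
rewrite /sorted_abs perm_sort (map_comp f s); apply: perm_map.
apply: uniq_perm => [||k]; first exact: enum_uniq.
  by rewrite map_inj_uniq ?enum_uniq //; exact: perm_inj.
rewrite mem_enum; symmetry; apply/mapP.
by exists (s^-1 k)%g; rewrite ?mem_enum ?permKV.
Qed.

Lemma owl_sorting_perm w x s : sorting_perm (abs_entries x) s ->
  owl w x = perm_sum (entries w) (abs_entries x) s.
Proof.
move=> s_sorts; rewrite /owl (sorted_abs_sorting_perm s_sorts).
by apply: eq_bigr => k _; rewrite (nth_map k) ?size_enum_ord // nth_ord_enum.
Qed.

Lemma nth_sorted_abs_ge0 x k : 0 <= nth 0 (sorted_abs x) k.
Proof.
have [kx|xk] := ltnP k (size (sorted_abs x)); last by rewrite nth_default.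
by have := mem_nth 0 kx; rewrite mem_sort => /mapP[i _ ->].
Qed.

Lemma owl_ge0 w x : (forall i : 'I_p, 0 <= w i 0) -> 0 <= owl w x.
Proof. by move=> w_ge0; apply: sumr_ge0 => k _; rewrite mulr_ge0 ?nth_sorted_abs_ge0. Qed.

Lemma owl0 w : owl w 0 = 0.
Proof.
apply: big1 => k _; have [kx|xk] := ltnP k (size (sorted_abs (0 : 'cV[R]_p))).
  by have := mem_nth 0 kx; rewrite mem_sort => /mapP[i _ ->]; rewrite mxE normr0 mulr0.
by rewrite nth_default ?mulr0.
Qed.

Variable w : 'cV[R]_p.
Hypothesis w_noninc : forall i j : 'I_p, (i <= j)%N -> w j 0 <= w i 0.

Lemma owl_Delta_le_gap (a b : 'I_p) : (a < b)%N -> owl_Delta w <= w a 0 - w b 0.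
Proof.
move=> ab; have a1p : (a.+1 < p)%N by apply: leq_ltn_trans ab (ltn_ord b).
apply: (@le_trans _ _ (w a 0 - w (Ordinal a1p) 0)).
  apply: foldr_min_le; apply/mapP; exists (a, Ordinal a1p) => //.
  by rewrite mem_filter /= eqxx mem_enum.
by rewrite lerD2l lerN2 w_noninc.
Qed.

Lemma exists_owl_sorting_perm x :
  exists2 s, sorting_perm (abs_entries x) s
           & owl w x = perm_sum (entries w) (abs_entries x) s.
Proof.
have [s s_sorts _] := exists_sorting_perm_max (abs_entries x) w_noninc.
by exists s => //; exact: owl_sorting_perm.
Qed.

Lemma perm_sum_le_owl x t : perm_sum (entries w) (abs_entries x) t <= owl w x.
Proof.
have [s s_sorts s_max] := exists_sorting_perm_max (abs_entries x) w_noninc.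
by rewrite (owl_sorting_perm _ s_sorts); exact: s_max.
Qed.

Lemma owl_transfer (x z : 'cV[R]_p) (i j : 'I_p) (eps : R) :
    0 <= eps -> `|x j 0| + eps < `|x i 0| - eps ->
    `|z i 0| = `|x i 0| - eps -> `|z j 0| = `|x j 0| + eps ->
    (forall l, l != i -> l != j -> `|z l 0| = `|x l 0|) ->
  owl w z + owl_Delta w * eps <= owl w x.
Proof.
move=> eps_ge0 gap zi zj zl.
have ij : i != j by apply/eqP => eij; move: gap; rewrite eij; lra.
have [s s_sorts ->] := exists_owl_sorting_perm z.
pose a := (s^-1 i)%g; pose b := (s^-1 j)%g.
have sa : s a = i by rewrite permKV.
have sb : s b = j by rewrite permKV.
have ab : (a < b)%N.
  rewrite ltnNge leq_eqVlt; apply/negP => /orP[/eqP/val_inj eab|ba].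
    by move: ij; rewrite -sa -sb eab eqxx.
  by move: (s_sorts _ _ ba); rewrite /abs_entries sa sb zi zj; lra.
have ab' : a != b by rewrite neq_ltn ab.
have rest : \sum_(k | (k != a) && (k != b)) entries w k * abs_entries z (s k)
           = \sum_(k | (k != a) && (k != b)) entries w k * abs_entries x (s k).
  apply: eq_bigr => k /andP[ka kb]; rewrite /abs_entries zl //.
    by apply: contraNneq ka => ski; rewrite /a -ski permK.
  by apply: contraNneq kb => skj; rewrite /b -skj permK.
have := perm_sum_le_owl x s; rewrite !(perm_sumD2 _ _ _ ab') rest /abs_entries sa sb.
have := ler_wpM2r eps_ge0 (owl_Delta_le_gap ab).
rewrite /entries zi zj; lra.
Qed.

End OwlNorm.

Section LeastSquares.
Variable R : rcfType.

Lemma sum_sqrDZ (n : nat) (a b : 'I_n -> R) (c : R) :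
  \sum_r (a r + c * b r) ^+ 2
  = \sum_r a r ^+ 2 + 2 * c * \sum_r a r * b r + c ^+ 2 * \sum_r b r ^+ 2.
Proof.
rewrite (eq_bigr (fun r => a r ^+ 2 + 2 * c * (a r * b r) + c ^+ 2 * b r ^+ 2)).
  by rewrite !big_split /= -!mulr_sumr.
by move=> r _; ring.
Qed.

Lemma cauchy_schwarz_sqr (n : nat) (e v : 'I_n -> R) :
  (\sum_r e r * v r) ^+ 2 <= (\sum_r e r ^+ 2) * (\sum_r v r ^+ 2).
Proof.
set A := \sum_r e r ^+ 2; set B := \sum_r v r ^+ 2; set C := \sum_r e r * v r.
have A0 : 0 <= A by apply: sumr_ge0 => r _; exact: sqr_ge0.
have B0 : 0 <= B by apply: sumr_ge0 => r _; exact: sqr_ge0.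
have [Bz|Bnz] := eqVneq B 0.
  have vz := psumr_eq0P (fun r _ => sqr_ge0 (v r)) Bz.
  rewrite [C]big1 ?expr0n ?mulr_ge0 // => r _.
  by move/eqP: (vz r isT); rewrite sqrf_eq0 => /eqP ->; rewrite mulr0.
have Bp : 0 < B by rewrite lt_def Bnz B0.
(* expand 0 <= sum_r (B e_r - C v_r)^2 = B (A B - C^2) *)
have : 0 <= \sum_r (B * e r - C * v r) ^+ 2 by apply: sumr_ge0 => r _; exact: sqr_ge0.
rewrite (eq_bigr (fun r => B ^+ 2 * e r ^+ 2 + (- (2 * B * C)) * (e r * v r)
                           + C ^+ 2 * v r ^+ 2)); last by move=> r _; ring.
rewrite !big_split /= -!mulr_sumr -/A -/B -/C => h.
by rewrite -subr_ge0 -(pmulr_rge0 _ Bp); lra.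
Qed.

Lemma cauchy_schwarz (n : nat) (e v : 'I_n -> R) :
  \sum_r e r * v r <= Num.sqrt (\sum_r e r ^+ 2) * Num.sqrt (\sum_r v r ^+ 2).
Proof.
have A0 : 0 <= \sum_r e r ^+ 2 by apply: sumr_ge0 => r _; exact: sqr_ge0.
rewrite -sqrtrM // (le_trans (ler_norm _)) // -sqrtr_sqr ler_sqrt ?cauchy_schwarz_sqr //.
by rewrite mulr_ge0 // sumr_ge0 // => r _; exact: sqr_ge0.
Qed.

End LeastSquares.

Section OwlMinimizer.
Variables (R : rcfType) (n p : nat) (A : 'M[R]_(n, p)) (y : 'cV[R]_n) (w : 'cV[R]_p).
Hypothesis w_noninc : forall i j : 'I_p, (i <= j)%N -> w j 0 <= w i 0.
Hypothesis w_ge0 : forall i : 'I_p, 0 <= w i 0.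
Hypothesis unit_cols : forall k : 'I_p, \sum_(r < n) A r k ^+ 2 = 1.
Implicit Types (x : 'cV[R]_p) (si sj eps : R).

Definition transfer (x : 'cV[R]_p) (i j : 'I_p) (si sj eps : R) : 'cV[R]_p :=
  x + \col_l (if l == i then - (eps * si) else if l == j then eps * sj else 0).

Lemma mul_transfer x (i j : 'I_p) si sj eps r : i != j ->
  (A *m transfer x i j si sj eps) r 0
  = (A *m x) r 0 + eps * (sj * A r j - si * A r i).
Proof.
move=> ij; rewrite mulmxDr mxE [X in _ + X]mxE (bigD1 i) // (bigD1 j) 1?eq_sym //=.
rewrite big1 => [|l /andP[li lj]]; last by rewrite mxE (negbTE li) (negbTE lj) mulr0.
by rewrite !mxE !eqxx (eq_sym j) (negbTE ij); ring.
Qed.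

Lemma owl_transfer_le x (i j : 'I_p) si sj eps :
    `|si| = 1 -> `|sj| = 1 -> x i 0 = si * `|x i 0| -> x j 0 = sj * `|x j 0| ->
    0 <= eps -> `|x j 0| + eps < `|x i 0| - eps ->
  owl w (transfer x i j si sj eps) + owl_Delta w * eps <= owl w x.
Proof.
move=> si1 sj1 xiE xjE eps_ge0 gap.
have ij : i != j by apply/eqP => eij; move: gap; rewrite eij; lra.
have xj_ge0 := normr_ge0 (x j 0).
apply: (owl_transfer w_noninc eps_ge0 gap) => [||l li lj];
  rewrite !mxE ?eqxx ?(negbTE li) ?(negbTE lj) ?addr0 //.
  have -> : x i 0 + - (eps * si) = si * (`|x i 0| - eps) by rewrite {1}xiE; ring.
  by rewrite normrM si1 mul1r ger0_norm //; lra.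
rewrite eq_sym (negbTE ij).
have -> : x j 0 + eps * sj = sj * (`|x j 0| + eps) by rewrite {1}xjE; ring.
by rewrite normrM sj1 mul1r ger0_norm //; lra.
Qed.

Lemma sum_sqr_signed_col_sub (i j : 'I_p) (si sj : R) : `|si| = 1 -> `|sj| = 1 ->
  \sum_r (sj * A r j - si * A r i) ^+ 2 = 2 - 2 * (si * sj) * \sum_r A r i * A r j.
Proof.
move=> si1 sj1; have si2 : si ^+ 2 = 1 by rewrite -real_normK ?num_real // si1 expr1n.
have sj2 : sj ^+ 2 = 1 by rewrite -real_normK ?num_real // sj1 expr1n.
rewrite (eq_bigr (fun r => sj ^+ 2 * A r j ^+ 2 + si ^+ 2 * A r i ^+ 2
                           + (- (2 * (si * sj))) * (A r i * A r j))); last by move=> r _; ring.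
by rewrite !big_split /= -!mulr_sumr !unit_cols si2 sj2; ring.
Qed.

Lemma exists_sign_align (a b rho : R) : a != 0 ->
  exists2 s, `|s| = 1 & b = s * `|b| /\ rho * Num.sg (a * b) <= Num.sg a * s * rho.
Proof.
move=> a0; have sga1 : `|Num.sg a| = 1 by rewrite normr_sg a0.
have [->|b0] := eqVneq b 0; last first.
  by exists (Num.sg b); rewrite ?normr_sg ?b0 -?numEsg // sgrM mulrC.
(* when b = 0 its sign is free: make the sign product agree with that of rho *)
exists (Num.sg a * (if 0 <= rho then 1 else -1)).
  by rewrite normrM sga1 mul1r; case: ifP; rewrite ?normrN normr1.
rewrite normr0 mulr0 mulr0 sgr0 mulr0 mulrA -expr2 sqr_sg a0 mul1r; split=> //.
by case: ifP => [|/negbT]; rewrite ?mul1r // -ltNge mulN1r oppr_ge0 => /ltW.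
Qed.

Lemma residual_le_response x :
    (forall z, owl_obj A y w x <= owl_obj A y w z) ->
  \sum_r ((A *m x) r 0 - y r 0) ^+ 2 <= \sum_r y r 0 ^+ 2.
Proof.
move=> x_opt; have := x_opt 0; rewrite /owl_obj mulmx0 owl0 addr0.
under [X in _ <= _ * X]eq_bigr do rewrite mxE sub0r sqrrN.
by have := owl_ge0 x w_ge0; lra.
Qed.

Lemma owl_minimizer_abs_le x (i j : 'I_p) :
    (forall z, owl_obj A y w x <= owl_obj A y w z) ->
    norm2 y * Num.sqrt (2 - 2 * (\sum_r A r i * A r j) * Num.sg (x i 0 * x j 0))
      < owl_Delta w ->
  `|x i 0| <= `|x j 0|.
Proof.
move=> x_opt small; rewrite leNgt; apply/negP => gt_ij.
set rho := \sum_r A r i * A r j in small.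
set C := 2 - _ in small; set bound := norm2 y * _ in small.
have ij : i != j by apply: contraTneq gt_ij => ->; rewrite ltxx.
have xi0 : x i 0 != 0 by rewrite -normr_eq0 gt_eqF // (le_lt_trans _ gt_ij).
pose si := Num.sg (x i 0); have si1 : `|si| = 1 by rewrite normr_sg xi0.
have [sj sj1 [xjE align]] := exists_sign_align (x j 0) rho xi0.
pose v r := sj * A r j - si * A r i; pose Ct := \sum_r v r ^+ 2.
have Ct_le_C : Ct <= C by rewrite /Ct sum_sqr_signed_col_sub // -/rho /C /si; lra.
have Ct_ge0 : 0 <= Ct by apply: sumr_ge0 => r _; exact: sqr_ge0.
pose e r := (A *m x) r 0 - y r 0.
have ev_le : \sum_r e r * v r <= bound.
  apply: le_trans (cauchy_schwarz e v) _; apply: ler_pM; rewrite ?sqrtr_ge0 //.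
    by rewrite ler_sqrt ?residual_le_response // sumr_ge0 // => r _; exact: sqr_ge0.
  by rewrite ler_sqrt // (le_trans Ct_ge0).
pose D := owl_Delta w - bound; have D_gt0 : 0 < D by rewrite subr_gt0.
pose g := `|x i 0| - `|x j 0|; have g_gt0 : 0 < g by rewrite subr_gt0.
have Ct1_gt0 : 0 < Ct + 1 by rewrite ltr_wpDl.
pose eps := Order.min (g / 4) (D / (Ct + 1)).
have eps_gt0 : 0 < eps by rewrite lt_min !divr_gt0.
have eps_g : eps <= g / 4 by rewrite ge_min lexx.
have eps_D : eps * (Ct + 1) <= D by rewrite -ler_pdivlMr // ge_min lexx orbT.
have gap : `|x j 0| + eps < `|x i 0| - eps.
  by have := normr_ge0 (x j 0); rewrite /g in eps_g; lra.
have owl_z := owl_transfer_le si1 sj1 (numEsg _) xjE (ltW eps_gt0) gap.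
have := x_opt (transfer x i j si sj eps); rewrite /owl_obj.
rewrite [X in _ <= _ * X + _](eq_bigr (fun r => (e r + eps * v r) ^+ 2)) => [|r _];
  last by rewrite mul_transfer // /e /v addrAC.
rewrite sum_sqrDZ -/Ct.
(* the objective changes by at most eps (bound + eps Ct / 2 - Delta) < 0 *)
have := ler_wpM2l (ltW eps_gt0) ev_le.
have := ler_wpM2l (ltW eps_gt0) eps_D.
have := mulr_gt0 eps_gt0 D_gt0.
rewrite /D; nra.
Qed.

End OwlMinimizer.

Theorem corollary1 (R : rcfType) (n p : nat) (A : 'M[R]_(n, p))
  (y : 'cV[R]_n) (w : 'cV[R]_p) (xhat : 'cV[R]_p) :
  (1 < p)%N ->
  owl_weights w ->
  (forall k : 'I_p, \sum_(r < n) A r k = 0) ->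
  (forall k : 'I_p, \sum_(r < n) A r k ^+ 2 = 1) ->
  (forall x : 'cV[R]_p, owl_obj A y w xhat <= owl_obj A y w x) ->
  forall i j : 'I_p,
    norm2 y * Num.sqrt (2 - 2 * (\sum_(r < n) A r i * A r j)
                              * Num.sg (xhat i 0 * xhat j 0))
      < owl_Delta w ->
    `|xhat i 0| = `|xhat j 0|.
Proof.
move=> _ [w_noninc [w_ge0 _]] _ unit_cols xhat_opt i j small.
have small' := small; rewrite [xhat i 0 * _]mulrC in small'.
rewrite (eq_bigr (fun r => A r j * A r i)) in small' => [|r _]; last exact: mulrC.
by apply: le_anti; rewrite !(owl_minimizer_abs_le w_noninc w_ge0 unit_cols xhat_opt).
Qed.
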